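(* Let $(x_n)_{n\ge0}$ be an infinite path in $\Gamma$ with $\ell(x_n)=n$. For each nonreal $z$ let $v_z$ be the nonzero solution of $Jv_z=zv_z$ on $\Gamma$ normalized by $v_z(x_0)=1$. Then for each $n\ge0$ there exist polynomials $b_n$ and $a_{n,x}$ ($x\in\Gamma_{x_n}$) with real coefficients such that $v_z(x)=a_{n,x}(z)/b_n(z)$ for all $x\in\Gamma_{x_n}$ and all nonreal $z$; moreover $b_n$ divides $b_{n+1}$ for every $n$.
   Context: Let $\Gamma$ be an infinite connected tree whose vertices are arranged in levels $\ell(x)\in\{0,1,2,\dots\}$: every vertex $x$ is adjacent to exactly one vertex $x'$ with $\ell(x')=\ell(x)+1$; for $\ell(x)\ge 1$ the set $N_x=\{y:\ y'=x\}$ of neighbours of $x$ on level $\ell(x)-1$ is finite and nonempty; $N_x=\emptyset$ if $\ell(x)=0$; there are no other edges. For $x\in\Gamma$, $\Gamma_x$ is the finite subtree consisting of $x$ and all its descendants. Fix $\lambda_x>0$, $\beta_x\in\mathbb R$. The Jacobi matrix $J$ acts on functions $v:\Gamma\to\mathbb C$ by $(Jv)(x)=\lambda_x v(x')+\beta_x v(x)+\sum_{y\in N_x}\lambda_y v(y)$. For nonreal $z$ a nonzero solution of $Jv=zv$ on $\Gamma$ exists, is unique up to a constant multiple, and vanishes nowhere. *)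

(* The complex numbers are modelled by an arbitrary
   numClosedFieldType C (e.g. the field of complex numbers); "real" means
   x \is Num.real, "nonreal" means z \notin Num.real. *)
From HB Require Import structures.
From mathcomp Require Import all_boot all_order all_algebra.
Set Implicit Arguments. Unset Strict Implicit. Unset Printing Implicit Defensive.
Import Order.TTheory GRing.Theory Num.Theory.
Local Open Scope ring_scope.

(* Levelled tree data: vertex type V, level lev, parent par (the unique
   neighbour x' one level up), ch x = list of the neighbours one level down
   (N_x, as a duplicate-free list). *)
Definition is_levelled_tree (V : eqType) (lev : V -> nat) (par : V -> V)
  (ch : V -> seq V) : Prop :=
  [/\ (forall x, lev (par x) = (lev x).+1),
      (forall x y, (y \in ch x) = (par y == x)),
      (forall x, uniq (ch x)),
      (forall x, (0 < lev x)%N -> ch x != [::]) &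
      (* connectedness: any two vertices have a common ancestor *)
      (forall x y, exists m n, iter m par x = iter n par y)].

(* y lies in Gamma_x : y is x or a descendant of x *)
Definition in_subtree (V : Type) (par : V -> V) (x y : V) : Prop :=
  exists k, iter k par y = x.

Definition jacobi (C : numClosedFieldType) (V : eqType) (par : V -> V)
  (ch : V -> seq V) (lam beta : V -> C) (v : V -> C) (x : V) : C :=
  lam x * v (par x) + beta x * v x + \sum_(y <- ch x) lam y * v y.

(* For nonreal z, the ratio m_u(z) = v_z(u) / v_z(u') only depends on the
   subtree Γ_u: the equation Jv = zv at u gives
     m_u = λ_u / (z - β_u - Σ_{c ∈ N_u} λ_c m_c).
   Induction on the level shows m_u = P_u / R_u with real polynomials, R_u
   without nonreal zeros, and Im z · Im m_u < 0; the sign condition makes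
   Im (z - β_u - Σ λ_c m_c) a nonzero multiple of Im z, so the new denominator
   has no nonreal zeros either. Along the way every v_z(w), w ∈ Γ_u, becomes
   v_z(u') times a ratio of real polynomials. Normalizing at x_0 ∈ Γ_{x_n}
   gives v_z = a / c_n on Γ_{x_n}, and b_n = c_0 ⋯ c_n makes b_n | b_{n+1}
   automatic. *)
From HB Require Import structures.
From mathcomp Require Import all_boot all_order all_algebra ring.
From Stdlib Require Import ClassicalEpsilon.
Import Order.TTheory GRing.Theory Num.Theory.
Local Open Scope ring_scope.

(* [rpredB], [rpred_sum], ... do not fire on [polyOver Num.real]: the qualifier
   [Num.real] is not unified with its closure structures, hence these variants. *)
Lemma polyOverB (R : nzRingType) (S : zmodClosed R) (p q : {poly R}) :
  p \is a polyOver S -> q \is a polyOver S -> p - q \is a polyOver S.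
Proof.
by move=> /polyOverP Sp /polyOverP Sq; apply/polyOverP => i; rewrite coefB rpredB.
Qed.

Lemma polyOver_sum (R : nzRingType) (S : addrClosed R) (I : Type) (r : seq I)
    (Q : pred I) (F : I -> {poly R}) :
  (forall i, Q i -> F i \is a polyOver S) -> \sum_(i <- r | Q i) F i \is a polyOver S.
Proof.
move=> SF; apply/polyOverP => k; rewrite coef_sum rpred_sum // => i /SF.
by move/polyOverP.
Qed.

Lemma polyOver_prod (R : nzRingType) (S : semiringClosed R) (I : Type) (r : seq I)
    (Q : pred I) (F : I -> {poly R}) :
  (forall i, Q i -> F i \is a polyOver S) -> \prod_(i <- r | Q i) F i \is a polyOver S.
Proof.
move=> SF; apply: (big_ind (fun p => p \is a polyOver S)) => //.
  exact: polyOver_mul1_closed.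
exact: polyOver_mulr_2closed.
Qed.

Lemma horner_mulr_div (F : fieldType) (p r k : {poly F}) (z : F) :
  k.[z] != 0 -> (p * k).[z] / (r * k).[z] = p.[z] / r.[z].
Proof. by move=> kz_neq0; rewrite !hornerM invfM mulrACA divff // mulr1. Qed.

Lemma Im_weyl_shift_gt0 (C : numClosedFieldType) (I : eqType) (s : seq I)
    (a m : I -> C) (z b : C) :
  z \notin Num.real -> b \is Num.real ->
  (forall i, i \in s -> 0 < a i /\ 'Im z * 'Im (m i) < 0) ->
  0 < 'Im z * 'Im (z - b - \sum_(i <- s) a i * m i).
Proof.
move=> zNR bR am_s.
have Imz_sq_gt0 : 0 < 'Im z * 'Im z.
  have Imz_neq0 : 'Im z != 0 by apply: contra zNR => /eqP/Creal_ImP.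
  by rewrite -expr2 -real_normK ?Creal_Im // exprn_gt0 // normr_gt0.
rewrite !raddfB /= (Creal_ImP _ bR) subr0 raddf_sum /= mulrBr mulr_sumr -sumrN.
apply: (lt_le_trans Imz_sq_gt0); rewrite lerDl big_seq; apply: sumr_ge0 => i /am_s.
case=> a_gt0 Imzm_lt0; rewrite ImMl ?gtr0_real // mulrCA oppr_ge0.
by rewrite pmulr_rle0 // ltW.
Qed.

Lemma ImM_div_lt0 (C : numClosedFieldType) (l s z : C) :
  0 < l -> 0 < 'Im z * 'Im s -> 'Im z * 'Im (l / s) < 0.
Proof.
move=> l_gt0 Imzs_gt0.
have s_neq0 : s != 0 by apply: contraTneq Imzs_gt0 => ->; rewrite raddf0 mulr0 ltxx.
rewrite ImMl ?gtr0_real // ImV.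
have -> : 'Im z * (l * (- 'Im s / `|s| ^+ 2)) = - (l / `|s| ^+ 2 * ('Im z * 'Im s)).
  by ring.
by rewrite oppr_lt0 mulr_gt0 // divr_gt0 // exprn_gt0 // normr_gt0.
Qed.

Definition real_rooted {C : numClosedFieldType} (p : {poly C}) : Prop :=
  p \is a polyOver Num.real /\ forall z, z \notin Num.real -> p.[z] != 0.

Lemma real_rooted1 (C : numClosedFieldType) : real_rooted (1 : {poly C}).
Proof. by split=> [|z _]; rewrite ?polyOverC ?rpred1 // hornerC oner_neq0. Qed.

Lemma real_rootedM (C : numClosedFieldType) (p q : {poly C}) :
  real_rooted p -> real_rooted q -> real_rooted (p * q).
Proof.
move=> [p_real p_nz] [q_real q_nz]; split; first exact: polyOver_mulr_2closed.
by move=> z zNR; rewrite hornerM mulf_neq0 ?p_nz ?q_nz.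
Qed.

Lemma real_rooted_prod (C : numClosedFieldType) (I : Type) (r : seq I) (Q : pred I)
    (F : I -> {poly C}) :
  (forall i, Q i -> real_rooted (F i)) -> real_rooted (\prod_(i <- r | Q i) F i).
Proof. by move=> QF; apply: big_ind => //; [exact: real_rooted1 | exact: real_rootedM]. Qed.

Lemma in_subtree_child {V : eqType} {par : V -> V} {ch : V -> seq V} {u w : V} :
  (forall x y, (y \in ch x) = (par y == x)) ->
  in_subtree par u w -> w = u \/ exists2 c, c \in ch u & in_subtree par c w.
Proof.
move=> ch_par [[|k] /= wk_u]; first by left.
by right; exists (iter k par w); [rewrite ch_par wk_u | exists k].
Qed.

Section WeylRatio.

Context {C : numClosedFieldType} {V : eqType} {par : V -> V} {ch : V -> seq V}
  {lam beta : V -> C} {v : C -> V -> C}.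

Definition subtree_ratios (u : V) (R : {poly C}) : Prop :=
  forall w, in_subtree par u w -> exists2 P : {poly C}, P \is a polyOver Num.real &
    forall z, z \notin Num.real -> v z w = v z (par u) * (P.[z] / R.[z]).

Definition weyl_ratio (u : V) (R P : {poly C}) : Prop :=
  P \is a polyOver Num.real /\ forall z, z \notin Num.real ->
    v z u = v z (par u) * (P.[z] / R.[z]) /\ 'Im z * 'Im (P.[z] / R.[z]) < 0.

Definition subtree_repr (u : V) (R : {poly C}) : Prop :=
  subtree_ratios u R /\ exists P, weyl_ratio u R P.

Lemma subtree_reprM (u : V) (R K : {poly C}) :
  subtree_repr u R -> real_rooted K -> subtree_repr u (R * K).
Proof.
move=> [ratios [P [P_real P_weyl]]] [K_real K_nz]; split.
  move=> w /ratios[Q Q_real Q_ratio]; exists (Q * K); first exact: polyOver_mulr_2closed.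
  by move=> z zNR; rewrite horner_mulr_div ?K_nz // Q_ratio.
exists (P * K); split; first exact: polyOver_mulr_2closed.
by move=> z zNR; rewrite horner_mulr_div ?K_nz //; apply: P_weyl.
Qed.

Lemma subtree_repr_common (s : seq V) :
  (forall c, c \in s -> exists2 R, real_rooted R & subtree_repr c R) ->
  exists2 R, real_rooted R & forall c, c \in s -> subtree_repr c R.
Proof.
elim: s => [|c s IH] reprs; first by exists 1 => //; exact: real_rooted1.
have [Rc Rc_rr Rc_repr] := reprs c (mem_head c s).
have [Rs Rs_rr Rs_repr] : exists2 R, real_rooted R & forall c, c \in s -> subtree_repr c R.
  by apply: IH => c' c'_s; apply: reprs; rewrite inE c'_s orbT.
exists (Rc * Rs); first exact: real_rootedM.
move=> c'; rewrite inE => /predU1P[-> | /Rs_repr c'_repr]; first exact: subtree_reprM.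
by rewrite mulrC; apply: subtree_reprM.
Qed.

Definition weyl_shift (u : V) (z : C) (m : V -> C) : C :=
  z - beta u - \sum_(c <- ch u) lam c * m c.

Definition weyl_denominator (u : V) (R : {poly C}) (P : V -> {poly C}) : {poly C} :=
  ('X - (beta u)%:P) * R - \sum_(c <- ch u) (lam c)%:P * P c.

Lemma horner_weyl_denominator (u : V) (R : {poly C}) (P : V -> {poly C}) (z : C) :
  R.[z] != 0 ->
  (weyl_denominator u R P).[z] = R.[z] * weyl_shift u z (fun c => (P c).[z] / R.[z]).
Proof.
move=> Rz_neq0; rewrite hornerD hornerN hornerM hornerXsubC horner_sum mulrBr mulr_sumr.
congr (_ - _); first by rewrite mulrC.
by apply: eq_bigr => c _; rewrite hornerCM; field.
Qed.

Hypothesis ch_par : forall x y, (y \in ch x) = (par y == x).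
Hypothesis lam_gt0 : forall x, 0 < lam x.
Hypothesis beta_real : forall x, beta x \is Num.real.
Hypothesis v_eigen :
  forall z, z \notin Num.real -> forall x, jacobi par ch lam beta (v z) x = z * v z x.

Lemma par_child {u c : V} : c \in ch u -> par c = u.
Proof. by rewrite ch_par => /eqP. Qed.

Lemma weyl_denominator_real (u : V) (R : {poly C}) (P : V -> {poly C}) :
  R \is a polyOver Num.real -> (forall c, c \in ch u -> P c \is a polyOver Num.real) ->
  weyl_denominator u R P \is a polyOver Num.real.
Proof.
move=> R_real P_real; apply: polyOverB.
  by apply: polyOver_mulr_2closed => //; apply: polyOverB; rewrite ?polyOverX ?polyOverC.
rewrite big_seq; apply: polyOver_sum => c /P_real Pc_real.
by apply: polyOver_mulr_2closed; rewrite ?polyOverC ?gtr0_real.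
Qed.

Lemma jacobi_children_ratio (u : V) (z : C) (m : V -> C) :
  z \notin Num.real -> (forall c, c \in ch u -> v z c = v z u * m c) ->
  weyl_shift u z m * v z u = lam u * v z (par u).
Proof.
move=> zNR v_ch; have := v_eigen z zNR u; rewrite /jacobi /weyl_shift.
have -> : \sum_(c <- ch u) lam c * v z c = v z u * \sum_(c <- ch u) lam c * m c.
  by rewrite mulr_sumr; apply: eq_big_seq => c /v_ch ->; rewrite mulrCA.
set Sm := \sum_(c <- ch u) _ => eigen_u.
have -> : (z - beta u - Sm) * v z u = z * v z u - beta u * v z u - v z u * Sm by ring.
by rewrite -eigen_u; ring.
Qed.

Lemma subtree_repr_parent (u : V) :
  (forall c, c \in ch u -> exists2 R, real_rooted R & subtree_repr c R) ->
  exists2 R, real_rooted R & subtree_repr u R.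
Proof.
move=> /subtree_repr_common[R [R_real R_nz] reprs].
have /choice[P P_weyl] : forall c, exists P, c \in ch u -> weyl_ratio c R P.
  move=> c; have [/reprs[_ [P P_weyl]] | c_nu] := boolP (c \in ch u); first by exists P.
  by exists 0 => c_u; case/negP: c_nu.
pose S z := weyl_shift u z (fun c => (P c).[z] / R.[z]).
pose A := weyl_denominator u R P.
have ImS_gt0 z : z \notin Num.real -> 0 < 'Im z * 'Im (S z).
  move=> zNR; apply: Im_weyl_shift_gt0 => // c /P_weyl[_ /(_ z zNR)[_]].
  by split.
have S_neq0 z : z \notin Num.real -> S z != 0.
  by move/ImS_gt0; apply: contraTneq => ->; rewrite raddf0 mulr0 ltxx.
have A_horner z : z \notin Num.real -> A.[z] = R.[z] * S z.
  by move=> zNR; rewrite horner_weyl_denominator ?R_nz.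
have v_u z : z \notin Num.real -> v z u = v z (par u) * (lam u / S z).
  move=> zNR; apply: (mulfI (S_neq0 z zNR)); rewrite jacobi_children_ratio //.
    by field; rewrite S_neq0.
  by move=> c c_u; have [_ /(_ z zNR)[]] := P_weyl c c_u; rewrite (par_child c_u).
have weyl_u : weyl_ratio u A ((lam u)%:P * R).
  split; first by apply: polyOver_mulr_2closed; rewrite ?polyOverC ?gtr0_real.
  move=> z zNR; have -> : ((lam u)%:P * R).[z] / A.[z] = lam u / S z.
    by rewrite hornerCM A_horner //; field; rewrite R_nz ?S_neq0.
  by split; [exact: v_u | exact: ImM_div_lt0 (lam_gt0 u) (ImS_gt0 z zNR)].
exists A; first split.
- by apply: weyl_denominator_real => // c /P_weyl[].
- by move=> z zNR; rewrite A_horner // mulf_neq0 ?R_nz ?S_neq0.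
split; last by exists ((lam u)%:P * R).
move=> w /(in_subtree_child ch_par)[-> | [c c_u /(proj1 (reprs c c_u))]].
  by case: weyl_u => Q_real Q_ratio; exists ((lam u)%:P * R) => // z /Q_ratio[].
case=> Pw Pw_real Pw_ratio; exists ((lam u)%:P * Pw).
  by apply: polyOver_mulr_2closed; rewrite ?polyOverC ?gtr0_real.
move=> z zNR; rewrite Pw_ratio // (par_child c_u) v_u // hornerCM A_horner //.
by field; rewrite R_nz ?S_neq0.
Qed.

Lemma subtree_repr_exists {lev : V -> nat} :
  (forall x, lev (par x) = (lev x).+1) ->
  forall u, exists2 R, real_rooted R & subtree_repr u R.
Proof.
move=> lev_par u; have [k] := ubnP (lev u); elim: k u => // k IH u lt_u_k.
apply: subtree_repr_parent => c c_u; apply: IH.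
by rewrite -ltnS -lev_par (par_child c_u).
Qed.

Lemma subtree_rational {lev : V -> nat} {u d : V} :
  (forall x, lev (par x) = (lev x).+1) ->
  in_subtree par u d -> (forall z, z \notin Num.real -> v z d = 1) ->
  exists (c : {poly C}) (a : V -> {poly C}), real_rooted c /\
    forall w, a w \is a polyOver Num.real /\
      (in_subtree par u w -> forall z, z \notin Num.real -> v z w = (a w).[z] / c.[z]).
Proof.
move=> lev_par u_d vd_1.
have [R [_ R_nz] [ratios _]] := subtree_repr_exists lev_par u.
have [Pd Pd_real Pd_ratio] := ratios d u_d.
have v_par z : z \notin Num.real -> Pd.[z] != 0 /\ v z (par u) = R.[z] / Pd.[z].
  move=> zNR; have := Pd_ratio z zNR; rewrite vd_1 // => one_eq.
  have Pd_nz : Pd.[z] != 0.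
    by apply: contra_eq_neq one_eq => ->; rewrite mul0r mulr0 oner_neq0.
  split=> //; apply: (mulIf Pd_nz); rewrite divfK //.
  by rewrite -[R.[z]]mul1r {1}one_eq mulrA divfK ?R_nz.
have /choice[a a_ratio] : forall w, exists Pw : {poly C}, Pw \is a polyOver Num.real /\
    (in_subtree par u w -> forall z, z \notin Num.real -> v z w = Pw.[z] / Pd.[z]).
  move=> w; have [u_w | u_nw] := classic (in_subtree par u w); last first.
    by exists 0; split=> [|/u_nw]; rewrite ?polyOverC ?rpred0.
  have [Pw Pw_real Pw_ratio] := ratios w u_w; exists Pw; split=> // _ z zNR.
  have [Pd_nz v_par_z] := v_par z zNR.
  by rewrite Pw_ratio // v_par_z; field; rewrite R_nz ?Pd_nz.
by exists Pd, a; split=> //; split=> // z /v_par[].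
Qed.

End WeylRatio.

Theorem corollary3 (C : numClosedFieldType) (V : eqType)
  (lev : V -> nat) (par : V -> V) (ch : V -> seq V)
  (lam beta : V -> C) (xs : nat -> V) (v : C -> V -> C) :
  is_levelled_tree lev par ch ->
  (forall x, lam x \is Num.real /\ 0 < lam x) ->
  (forall x, beta x \is Num.real) ->
  (forall n, lev (xs n) = n) ->
  (forall n, xs n.+1 = par (xs n)) ->
  (forall z, z \notin Num.real ->
     (forall x, jacobi par ch lam beta (v z) x = z * v z x) /\ v z (xs 0%N) = 1) ->
  exists (b : nat -> {poly C}) (a : nat -> V -> {poly C}),
    forall n,
      [/\ b n \is a polyOver Num.real,
          (forall x, a n x \is a polyOver Num.real),
          (forall x z, in_subtree par (xs n) x -> z \notin Num.real ->
              (b n).[z] != 0 /\ v z x = (a n x).[z] / (b n).[z]) &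
          b n %| b n.+1].
Proof.
move=> [lev_par ch_par _ _ _] lam_pos beta_real _ xs_succ v_sol.
have xs0_below n : in_subtree par (xs n) (xs 0%N).
  by exists n; elim: n => //= n ->; rewrite xs_succ.
have rational n := subtree_rational ch_par (fun x => (lam_pos x).2) beta_real
  (fun z zNR => (v_sol z zNR).1) lev_par (xs0_below n) (fun z zNR => (v_sol z zNR).2).
have /choice[c /choice[a ca_spec]] := rational.
have c_rr k : real_rooted (c k) by have [] := ca_spec k.
exists (fun n => \prod_(k < n.+1) c k), (fun n w => a n w * \prod_(k < n) c k) => n.
split.
- by apply: polyOver_prod => k _; case: (c_rr k).
- move=> w; apply: polyOver_mulr_2closed; first by case: (ca_spec n) => _ /(_ w)[].
  by apply: polyOver_prod => k _; case: (c_rr k).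
- move=> w z w_below zNR; case: (ca_spec n) => _ /(_ w)[_ /(_ w_below z zNR) ->].
  have [_ prod_nz] : real_rooted (\prod_(k < n) c k) by apply: real_rooted_prod.
  rewrite big_ord_recr /= !hornerM mulf_neq0 ?(proj2 (c_rr n)) ?prod_nz //.
  by split=> //; field; rewrite (proj2 (c_rr n)) ?prod_nz.
- by rewrite [X in _ %| X]big_ord_recr /= dvdp_mulr.
Qed.
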